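(* Let $S$ be a TBLS search with strict partial order $\prec_S$ on $P_f(\mathbb{N}^+)$, and let $G=(V,E)$ be a graph. An ordering $\sigma$ of $V$ is an $S$-ordering of $G$ if and only if for every $x,y\in V$ with $x<_\sigma y$ we have $N_\sigma(x,x)\not\prec_S N_\sigma(y,x)$.
   Context: Let $G=(V,E)$ be a finite (not necessarily connected) undirected graph with $n$ vertices; $N(v)$ denotes the set of neighbours of $v$. An ordering of $V$ is a bijection $\sigma:\{1,\dots,n\}\to V$; $\sigma(i)$ is the $i$th vertex and $x<_\sigma y$ means $\sigma^{-1}(x)<\sigma^{-1}(y)$. $P_f(\mathbb{N}^+)$ is the set of finite subsets of the positive integers. Given a strict partial order $\prec$ on $P_f(\mathbb{N}^+)$ and an ordering $\tau$ of $V$, the Tie-Breaking Label Search $\mathrm{TBLS}(G,\prec,\tau)$ is the procedure: set $label(v)=\emptyset$ for every $v$; for $i=1,\dots,n$: let Eligible be the set of unnumbered vertices $x$ such that there is no unnumbered vertex $y$ with $label(x)\prec label(y)$; let $v$ be the first vertex of Eligible in the ordering $\tau$; set $\sigma(i)=v$ ($v$ becomes numbered); for every unnumbered neighbour $w$ of $v$ replace $label(w)$ by $label(w)\cup\{i\}$. The output is $\sigma$. A TBLS search $S$ is specified by a strict partial order $\prec_S$ on $P_f(\mathbb{N}^+)$; an ordering $\sigma$ of $V$ is an $S$-ordering of $G$ if $\sigma=\mathrm{TBLS}(G,\prec_S,\tau)$ for some ordering $\tau$ of $V$. For vertices $u,v$ and an ordering $\sigma$, $N_\sigma(u,v)=\{i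 : \sigma(i)\in N(u)\text{ and }\sigma(i)<_\sigma v\}$. *)

From mathcomp Require Import all_boot finmap.
Set Implicit Arguments. Unset Strict Implicit. Unset Printing Implicit Defensive.
Local Open Scope fset_scope.

(* A graph on the finite vertex type V is an edge relation e : rel V,
   assumed symmetric and irreflexive in the theorem; N(v) = [pred w | e v w].
   An ordering sigma of V (bijection {1..n} -> V) is represented by the
   sequence [:: sigma(1); ...; sigma(n)], i.e. a duplicate-free listing of V.
   Positions are 1-based: sigma(i) = nth _ s (i-1), and the position of a
   vertex x is (index x s).+1. *)

Definition is_ordering (V : finType) (s : seq V) : bool := perm_eq s (enum V).

Definition ord_lt (V : finType) (s : seq V) (x y : V) : bool :=
  index x s < index y s.

Definition Nsig (V : finType) (e : rel V) (s : seq V) (u v : V) : {fset nat} :=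
  [fset (index z s).+1 | z in [seq z <- s | e u z && ord_lt s z v]].

Section TBLS.
Variables (V : finType) (e : rel V) (prec : rel {fset nat}) (tau : seq V).

Definition eligible (num : seq V) (lab : V -> {fset nat}) (x : V) : bool :=
  (x \notin num) && [forall y, (y \notin num) ==> ~~ prec (lab x) (lab y)].

(* Run k more iterations; i is the current step number, num the sequence
   sigma(1..i-1) of numbered vertices, lab the current labels.  v is the
   first vertex of Eligible in tau; its unnumbered neighbours get i added. *)
Fixpoint tbls_iter (k i : nat) (num : seq V) (lab : V -> {fset nat}) : seq V :=
  match k with
  | 0 => num
  | k'.+1 =>
    match ohead [seq x <- tau | eligible num lab x] with
    | None => num
    | Some v =>
        let num' := rcons num v in
        tbls_iter k' i.+1 num'
          (fun w => if (w \notin num') && e v w then i |` lab w else lab w)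
    end
  end.

Definition TBLS : seq V := tbls_iter #|V| 1 [::] (fun _ => fset0).

End TBLS.

Definition is_S_ordering (V : finType) (e : rel V) (prec : rel {fset nat})
  (sigma : seq V) : Prop :=
  exists tau : seq V, is_ordering tau /\ sigma = TBLS e prec tau.

From mathcomp Require Import all_boot finmap.
Set Implicit Arguments. Unset Strict Implicit. Unset Printing Implicit Defensive.
Local Open Scope fset_scope.

(** The label that TBLS gives to an unnumbered vertex w depends only on which
    neighbours of w have been numbered and at which steps, so at any moment it
    is the set of positions of the neighbours of w in the already numbered
    prefix.  Hence the N_sigma(y, x) are exactly the labels at the step where x
    is numbered, and sigma is an S-ordering iff each sigma(i) was eligible at
    step i.  When this holds, running TBLS with tau := sigma reproduces sigma,
    because at each step the first eligible vertex of sigma is the next one. *)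

Lemma mem_imfset_has (T K : choiceType) (f : T -> K) (s : seq T) n :
  (n \in [fset f z | z in s]) = has (fun z => n == f z) s.
Proof. by apply/imfsetP/hasP => [[z zs ->]|[z zs /eqP ->]]; exists z. Qed.

Lemma index_take (T : eqType) (s : seq T) q z :
  index z s < q -> index z (take q s) = index z s.
Proof.
move=> lt_zq; have [zs|zNs] := boolP (z \in s).
  by rewrite -{2}(cat_take_drop q s) index_cat in_take ?lt_zq.
by rewrite take_oversize // ltnW // -(memNindex zNs).
Qed.

Lemma notin_take_index (T : eqType) (s : seq T) x : x \notin take (index x s) s.
Proof. by apply/negP => /index_ltn; rewrite ltnn. Qed.

Section Labels.
Variables (V : finType) (e : rel V).

Definition label_after (num : seq V) (w : V) : {fset nat} :=
  [fset (index z num).+1 | z in [seq z <- num | e w z]].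

Lemma Nsig_label_after (s : seq V) w x :
  Nsig e s w x = label_after (take (index x s) s) w.
Proof.
apply/fsetP => n; rewrite !mem_imfset_has.
apply/hasP/hasP => [[z]|[z]].
  rewrite mem_filter => /andP[/andP[ewz lt_zx] zs] /eqP ->.
  by exists z; rewrite ?mem_filter ?ewz ?in_take ?index_take.
rewrite mem_filter => /andP[ewz z_pre] /eqP ->.
have lt_zx := index_ltn z_pre.
exists z; last by rewrite index_take.
by rewrite mem_filter ewz /ord_lt lt_zx (mem_take z_pre).
Qed.

Hypothesis e_sym : symmetric e.

Lemma label_after_rcons (num : seq V) v w : v \notin num ->
  label_after (rcons num v) w =
  if e v w then (size num).+1 |` label_after num w else label_after num w.
Proof.
move=> vNnum; apply/fsetP => n.
have index_num z : z \in num -> index z (rcons num v) = index z num.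
  by move=> znum; rewrite -cats1 index_cat znum.
have index_v : index v (rcons num v) = size num.
  by rewrite -cats1 index_cat (negPf vNnum) /= eqxx addn0.
rewrite /label_after filter_rcons e_sym.
case: ifP => evw; rewrite ?inE !mem_imfset_has ?has_rcons ?index_v; first congr (_ || _).
all: by apply: eq_in_has => z; rewrite mem_filter => /andP[_ /index_num ->].
Qed.

End Labels.

Section Run.
Variables (V : finType) (e : rel V) (prec : rel {fset nat}).
Hypothesis e_sym : symmetric e.

Definition labels_agree (num : seq V) (lab : V -> {fset nat}) :=
  forall w, w \notin num -> lab w = label_after e num w.

Lemma labels_agree0 : labels_agree [::] (fun _ => fset0).
Proof. by move=> w _; apply/fsetP => n; rewrite mem_imfset_has inE. Qed.

Lemma labels_agree_step num lab v : v \notin num -> labels_agree num lab ->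
  labels_agree (rcons num v) (fun w =>
    if (w \notin rcons num v) && e v w then (size num).+1 |` lab w else lab w).
Proof.
move=> vNnum agree w; rewrite mem_rcons inE negb_or => /andP[wv wNnum].
by rewrite wv wNnum /= label_after_rcons // agree.
Qed.

Lemma eligible_label_after num lab x : labels_agree num lab ->
  eligible prec num lab x = eligible prec num (label_after e num) x.
Proof.
move=> agree; rewrite /eligible; have [//|xNnum] := boolP (x \in num).
rewrite /= agree //; apply: eq_forallb => y.
by have [//|yNnum] := boolP (y \in num); rewrite agree.
Qed.

Definition eligible_at (s : seq V) (x : V) : bool :=
  eligible prec (take (index x s) s) (label_after e (take (index x s) s)) x.

Lemma tbls_iter_eligible_at tau k num lab : labels_agree num lab ->
  let s := tbls_iter e prec tau k (size num).+1 num lab in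
  exists2 rest, s = num ++ rest & {in rest, forall x, eligible_at s x}.
Proof.
elim: k num lab => [|k IH] num lab agree /=; first by exists [::]; rewrite ?cats0.
case Ehead: ohead => [v|] /=; last by exists [::]; rewrite ?cats0.
have : v \in [seq x <- tau | eligible prec num lab x].
  by move: Ehead; case: filter => //= a l [<-]; rewrite inE eqxx.
rewrite mem_filter => /andP[elig_v _]; have vNnum : v \notin num by case/andP: elig_v.
have [rest s_eq elig_rest] := IH _ _ (labels_agree_step vNnum agree).
move: s_eq elig_rest; rewrite size_rcons => ->; rewrite cat_rcons => elig_rest.
exists (v :: rest) => // x; rewrite inE => /predU1P[->|]; last exact: elig_rest.
by rewrite /eligible_at take_pivot // -(eligible_label_after _ agree).
Qed.

Lemma tbls_iter_self (s : seq V) : uniq s -> {in s, forall x, eligible_at s x} ->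
  forall rest num lab, num ++ rest = s -> labels_agree num lab ->
  tbls_iter e prec s (size rest) (size num).+1 num lab = s.
Proof.
move=> s_uniq elig_s; elim=> [|v rest IH] num lab s_eq agree /=.
  by rewrite -s_eq cats0.
have vNnum : v \notin num.
  by move: s_uniq; rewrite -s_eq cat_uniq /= => /and3P[_ /norP[]].
have elig_v : eligible prec num lab v.
  have := elig_s v; rewrite -s_eq mem_cat inE eqxx orbT => /(_ isT).
  by rewrite /eligible_at take_pivot // eligible_label_after.
have -> : [seq x <- s | eligible prec num lab x] =
          v :: [seq x <- rest | eligible prec num lab x].
  rewrite -s_eq filter_cat /= elig_v (@eq_in_filter _ _ pred0) ?filter_pred0 //.
  by move=> x xnum; rewrite /eligible xnum.
have := IH _ _ _ (labels_agree_step vNnum agree); rewrite size_rcons; apply.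
by rewrite cat_rcons.
Qed.

Lemma eligible_atE (s : seq V) x : irreflexive prec -> (forall y, y \in s) ->
  eligible_at s x =
  [forall y, ord_lt s x y ==> ~~ prec (Nsig e s x x) (Nsig e s y x)].
Proof.
move=> prec_irr s_full; rewrite /eligible_at /eligible notin_take_index /=.
apply: eq_forallb => y; rewrite !Nsig_label_after.
have [->|yx] := eqVneq y x; first by rewrite prec_irr /= !implybT.
rewrite (in_take _ (s_full y)) -leqNgt leq_eqVlt /ord_lt.
suff -> : (index x s == index y s) = false by [].
apply: contra_neqF yx => /eqP idx.
by rewrite -(nth_index x (s_full y)) -idx nth_index.
Qed.

End Run.

Theorem mainTheorem1 (V : finType) (e : rel V) (prec : rel {fset nat}) :
  symmetric e -> irreflexive e ->
  irreflexive prec -> transitive prec ->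
  forall sigma : seq V, is_ordering sigma ->
  (is_S_ordering e prec sigma <->
   (forall x y : V, ord_lt sigma x y ->
      ~~ prec (Nsig e sigma x x) (Nsig e sigma y x))).
Proof.
move=> e_sym _ prec_irr _ sigma sigma_ord.
have sigma_uniq : uniq sigma by rewrite (perm_uniq sigma_ord) enum_uniq.
have sigma_full y : y \in sigma by rewrite (perm_mem sigma_ord) mem_enum.
have eligibleE x := eligible_atE e x prec_irr sigma_full.
split=> [[tau [_ sigma_eq]] x y|cond].
  have [rest rest_eq elig] := tbls_iter_eligible_at prec e_sym tau #|V| (labels_agree0 e).
  rewrite -[tbls_iter _ _ _ _ _ _ _]/(TBLS e prec tau) -sigma_eq /= in rest_eq elig.
  subst rest; have := elig x (sigma_full x).
  by rewrite eligibleE => /forallP /(_ y) /implyP.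
have card_V : #|V| = size sigma by rewrite (perm_size sigma_ord) cardE.
exists sigma; split=> //; rewrite /TBLS card_V.
apply/esym/(tbls_iter_self e_sym sigma_uniq _ (erefl : [::] ++ sigma = sigma)).
  by move=> x _; rewrite eligibleE; apply/forallP => y; apply/implyP/cond.
exact: labels_agree0.
Qed.
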